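(* Let $l$ be odd, $K$ a field of characteristic $0$ and $q\in K$ such that $q^2$ is a primitive $l$-th root of unity. For every $n$ with $2\le n\le l-1$, $$\sum_{i=0}^{l-1}S_{i,n}(1,q^2,q^4,\dots,q^{2(n-1)})=\frac{l}{(1-q^2)(1-q^4)\cdots(1-q^{2(n-1)})},$$ where $S_{d,n}(x_1,\dots,x_n)=\sum_{1\le i_1\le\cdots\le i_d\le n}x_{i_1}\cdots x_{i_d}$ and $S_{0,n}=1$. *)

From HB Require Import structures.
From mathcomp Require Import all_boot all_order all_algebra.
Set Implicit Arguments. Unset Strict Implicit. Unset Printing Implicit Defensive.
Import GRing.Theory.
Local Open Scope ring_scope.

(* For d = 0 the only tuple is the empty one,
   giving S_{0,n} = 1. *)
Definition hsym (K : comRingType) (n d : nat) (x : 'I_n -> K) : K :=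
  \sum_(t : d.-tuple 'I_n | sorted (fun a b : 'I_n => (a <= b)%N) t)
     \prod_(j <- t) x j.

From HB Require Import structures.
From mathcomp Require Import all_boot all_order all_algebra.
From mathcomp Require Import zify ring.
Set Implicit Arguments. Unset Strict Implicit. Unset Printing Implicit Defensive.
Import GRing.Theory.
Local Open Scope ring_scope.

(* Write h_d(x_0, ..., x_{m-1}) for the complete homogeneous symmetric
   polynomial [hsym d x].  The proof has three layers.
   1. Splitting off the first (resp. last) variable gives the recursions
        h_{d+1}(x_0..x_m) = h_{d+1}(x_1..x_m) + x_0 h_d(x_0..x_m)
      (and its mirror image, obtained by reversing the variables), together
      with h_0 = 1, h_{d+1}() = 0 and homogeneity.
   2. On the geometric points H_m(d) = h_d(1, z, ..., z^(m-1)) the two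
      recursions combine into the shift identity
        (1 - z^m) H_{m+1}(d) = (1 - z^(d+1)) H_m(d+1).
   3. If z is a primitive l-th root of unity, the shift identity with
      d = l-1 kills H_{m+1}(l-1) for 0 < m < l, and a telescoping argument
      yields (1 - z^m) sum_{i<l} H_{m+1}(i) = sum_{i<l} H_m(i).  Since
      H_1 = 1, induction on m gives
        (sum_{i<l} H_m(i)) * prod_{1<=j<m} (1 - z^j) = l.
   The theorem is the case z = q^2, m = n; the product is nonzero because
   z^j <> 1 for 0 < j < l. *)

Definition ord_le n (a b : 'I_n) : bool := (a <= b)%N.

Lemma ord_le_trans n : transitive (@ord_le n).
Proof. by move=> a b c; exact: leq_trans. Qed.

Lemma sum_tuple_cons (R : nmodType) (T : finType) d (P : pred (d.+1.-tuple T))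
  (F : d.+1.-tuple T -> R) :
  \sum_(t : d.+1.-tuple T | P t) F t =
  \sum_(a : T) \sum_(t : d.-tuple T | P (cons_tuple a t)) F (cons_tuple a t).
Proof.
rewrite pair_big_dep /=.
rewrite (reindex (fun p : T * d.-tuple T => cons_tuple p.1 p.2)) //=.
exists (fun t => (thead t, behead_tuple t)) => [[a t] _ | t _] /=.
  by congr pair; apply: val_inj.
by rewrite [t in RHS]tuple_eta.
Qed.

Section CompleteHomogeneous.
Variable K : comNzRingType.

Lemma hsym_ext n d (x y : 'I_n -> K) : x =1 y -> hsym d x = hsym d y.
Proof. by move=> exy; apply: eq_bigr => t _; apply: eq_bigr => j _. Qed.

Lemma hsym0 n (x : 'I_n -> K) : hsym 0 x = 1.
Proof.
rewrite /hsym (eq_bigl predT) => [|t]; last by rewrite tuple0.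
rewrite (eq_bigr (fun _ => 1)) => [|t _]; last by rewrite tuple0 big_nil.
by rewrite sumr_const card_tuple expn0.
Qed.

Lemma hsym_nil d (x : 'I_0 -> K) : hsym d.+1 x = 0.
Proof. by rewrite /hsym big1 // => t _; case: (thead t). Qed.

Lemma hsym_scale n d (c : K) (x : 'I_n -> K) :
  hsym d (fun i => c * x i) = c ^+ d * hsym d x.
Proof.
rewrite /hsym mulr_sumr; apply: eq_bigr => t _.
rewrite -{2}(size_tuple t); elim: (tval t) => [|a s IH].
  by rewrite !big_nil mulr1.
by rewrite !big_cons IH /= exprS; ring.
Qed.

Lemma sum_path_lift m d (x : 'I_m.+1 -> K) (b : 'I_m) :
  \sum_(t : d.-tuple 'I_m.+1 | path (@ord_le _) (lift ord0 b) t) \prod_(j <- t) x j =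
  \sum_(t : d.-tuple 'I_m | path (@ord_le _) b t) \prod_(j <- t) x (lift ord0 j).
Proof.
pose unshift i := odflt b (unlift ord0 i).
rewrite (reindex_onto (map_tuple (lift ord0)) (map_tuple unshift)); last first.
  move=> t; rewrite (path_sortedE (@ord_le_trans _)) => /andP[t_ge _].
  apply: val_inj; rewrite /= -map_comp -[RHS]map_id; apply/eq_in_map => i it /=.
  have := allP t_ge i it; rewrite /ord_le lift0 /unshift.
  by case: unliftP => [j ->|->].
apply: eq_big => [t|t _]; last by rewrite big_map.
have -> : map_tuple unshift (map_tuple (lift ord0) t) = t.
  apply: val_inj; rewrite /= -map_comp -[RHS]map_id.
  by apply: eq_map => i /=; rewrite /unshift liftK.
by rewrite /= path_map eqxx andbT; apply: eq_path => u v; rewrite /ord_le /= /bump.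
Qed.

(* Recursion on the first variable: either it does not occur, or it is the
   smallest index of the monomial. *)
Lemma hsym_head m d (x : 'I_m.+1 -> K) :
  hsym d.+1 x = hsym d.+1 (fun i : 'I_m => x (lift ord0 i)) + x ord0 * hsym d x.
Proof.
rewrite /hsym sum_tuple_cons big_ord_recl /= addrC; congr (_ + _); last first.
  rewrite mulr_sumr; apply: eq_big => [t|t _]; last by rewrite big_cons.
  by rewrite /= (path_sortedE (@ord_le_trans _)) (_ : all _ t = true) //; apply/allP.
rewrite sum_tuple_cons; apply: eq_bigr => b _.
under eq_bigr do rewrite /= big_cons.
under [RHS]eq_bigr do rewrite /= big_cons.
by rewrite -!mulr_sumr (sum_path_lift _ x b).
Qed.

Lemma hsym_rev n d (x : 'I_n -> K) : hsym d (fun i => x (rev_ord i)) = hsym d x.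
Proof.
pose flip (t : d.-tuple 'I_n) := rev_tuple (map_tuple (@rev_ord n) t).
have flipK : involutive flip.
  move=> t; apply: val_inj; rewrite /= map_rev revK -map_comp -[RHS]map_id.
  by apply: eq_map => i /=; rewrite rev_ordK.
rewrite /hsym [RHS](reindex flip); last by exists flip => t _.
apply: eq_big => [t|t _]; last by rewrite /= big_rev big_map.
rewrite /= rev_sorted sorted_map; apply: eq_sorted => u v /=.
have := ltn_ord u; have := ltn_ord v; rewrite /ord_le /= => v_lt u_lt.
by apply/idP/idP; lia.
Qed.

Lemma hsym_last m d (x : 'I_m.+1 -> K) :
  hsym d.+1 x =
  hsym d.+1 (fun i : 'I_m => x (widen_ord (leqnSn m) i)) + x ord_max * hsym d x.
Proof.
rewrite -hsym_rev hsym_head -hsym_rev -[hsym d x]hsym_rev.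
congr (_ + _ * _); last by congr x; apply: val_inj => /=; lia.
apply: hsym_ext => i; congr x; apply: val_inj; rewrite /= /bump /=.
by have := ltn_ord i; lia.
Qed.

End CompleteHomogeneous.

Lemma telescope_sum (R : comNzRingType) (A B : nat -> R) (c : R) (l : nat) :
  A 0%N = B 0%N -> A l = 0 -> (forall d, A d.+1 = B d.+1 + c * A d) ->
  (1 - c) * \sum_(i < l.+1) A i = \sum_(i < l.+1) B i.
Proof.
move=> AB0 Al AB.
have sumA_top : \sum_(i < l.+1) A i = \sum_(i < l) A i.
  by rewrite big_ord_recr /= Al addr0.
have sumA : \sum_(i < l.+1) A i =
            B 0%N + \sum_(i < l) B i.+1 + c * \sum_(i < l) A i.
  rewrite big_ord_recl AB0 mulr_sumr -addrA -big_split /=.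
  by congr (_ + _); apply: eq_bigr => i _; exact: AB.
have sumB : \sum_(i < l.+1) B i = B 0%N + \sum_(i < l) B i.+1.
  by rewrite big_ord_recl.
by rewrite sumB mulrBl mul1r {1}sumA -sumA_top; ring.
Qed.

Section GeometricPoints.
Variables (K : comNzRingType) (z : K).

Definition hgeom (m d : nat) : K := hsym d (fun k : 'I_m => z ^+ k).

Lemma hgeom0 m : hgeom m 0 = 1.
Proof. exact: hsym0. Qed.

Lemma hgeom_one d : hgeom 1 d = 1.
Proof.
elim: d => [|d IH]; first exact: hgeom0.
by rewrite /hgeom hsym_last hsym_nil add0r expr0 mul1r.
Qed.

(* First-variable recursion: dropping the variable 1 rescales the rest by z. *)
Lemma hgeom_head m d : hgeom m.+1 d.+1 = z ^+ d.+1 * hgeom m d.+1 + hgeom m.+1 d.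
Proof.
rewrite /hgeom hsym_head expr0 mul1r -hsym_scale.
by congr (_ + _); apply: hsym_ext => i; rewrite lift0 exprS.
Qed.

Lemma hgeom_last m d : hgeom m.+1 d.+1 = hgeom m d.+1 + z ^+ m * hgeom m.+1 d.
Proof. exact: hsym_last. Qed.

(* Eliminating H_{m+1}(d+1) between the two recursions. *)
Lemma hgeom_shift m d :
  (1 - z ^+ m) * hgeom m.+1 d = (1 - z ^+ d.+1) * hgeom m d.+1.
Proof.
have rec_first := hgeom_head m d; have rec_last := hgeom_last m d.
have e1 : z ^+ d.+1 * hgeom m d.+1 = hgeom m.+1 d.+1 - hgeom m.+1 d.
  by rewrite rec_first addrK.
have e2 : z ^+ m * hgeom m.+1 d = hgeom m.+1 d.+1 - hgeom m d.+1.
  by rewrite rec_last addrC addKr.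
by rewrite !mulrBl !mul1r e1 e2; ring.
Qed.

End GeometricPoints.

Section PrimitiveRoot.
Variables (K : fieldType) (z : K) (l : nat).
Hypothesis z_prim : l.-primitive_root z.

Lemma one_sub_prim_neq0 j : (0 < j < l)%N -> 1 - z ^+ j != 0.
Proof.
case/andP=> j_gt0 j_lt_l; rewrite subr_eq0 eq_sym -(prim_order_dvd z_prim).
by apply/negP => /(dvdn_leq j_gt0); rewrite leqNgt j_lt_l.
Qed.

Lemma hgeom_top_eq0 m : (0 < m < l)%N -> hgeom z m.+1 l.-1 = 0.
Proof.
move=> m_range; have l_gt0 := prim_order_gt0 z_prim.
have := hgeom_shift z m l.-1; rewrite prednK // (prim_expr_order z_prim) subrr mul0r.
by move/eqP; rewrite mulf_eq0 (negbTE (one_sub_prim_neq0 m_range)) => /eqP.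
Qed.

Lemma sum_hgeom_step m : (0 < m < l)%N ->
  (1 - z ^+ m) * \sum_(i < l) hgeom z m.+1 i = \sum_(i < l) hgeom z m i.
Proof.
move=> m_range; have l_gt0 := prim_order_gt0 z_prim.
rewrite -(prednK l_gt0); apply: telescope_sum.
- by rewrite !hgeom0.
- exact: hgeom_top_eq0.
- by move=> d; exact: hgeom_last.
Qed.

(* Iterating [sum_hgeom_step] down to H_1 = 1, whose sum is l. *)
Lemma sum_hgeom_prod m : (0 < m < l)%N ->
  (\sum_(i < l) hgeom z m i) * \prod_(1 <= j < m) (1 - z ^+ j) = l%:R.
Proof.
elim: m => [|m IH] //; case: m IH => [|m] IH m_range.
  rewrite big_geq // mulr1 (eq_bigr (fun _ => 1)) => [|i _]; last exact: hgeom_one.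
  by rewrite sumr_const card_ord.
rewrite big_nat_recr //= mulrA [_ * (1 - _)]mulrC mulrA.
by rewrite sum_hgeom_step ?IH //; lia.
Qed.

End PrimitiveRoot.

Theorem mainTheorem5 (K : fieldType) (l : nat) (q : K)
  (hchar : [pchar K] =i pred0)
  (hl : odd l)
  (hq : l.-primitive_root (q ^+ 2))
  (n : nat) (hn2 : (2 <= n)%N) (hnl : (n <= l - 1)%N) :
  \sum_(i < l) hsym i (fun k : 'I_n => q ^+ (2 * k)) =
  l%:R / \prod_(1 <= j < n) (1 - q ^+ (2 * j)).
Proof.
have n_range : (0 < n < l)%N by lia.
have sum_eq : \sum_(i < l) hsym i (fun k : 'I_n => q ^+ (2 * k)) =
              \sum_(i < l) hgeom (q ^+ 2) n i.
  by apply: eq_bigr => i _; apply: hsym_ext => k; rewrite exprM.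
have prod_eq : \prod_(1 <= j < n) (1 - q ^+ (2 * j)) =
               \prod_(1 <= j < n) (1 - (q ^+ 2) ^+ j).
  by apply: eq_bigr => j _; rewrite exprM.
have prod_neq0 : \prod_(1 <= j < n) (1 - (q ^+ 2) ^+ j) != 0.
  rewrite prodf_seq_neq0; apply/allP => j; rewrite mem_index_iota => j_range.
  by apply/implyP => _; apply: (one_sub_prim_neq0 hq); lia.
by rewrite sum_eq prod_eq -(sum_hgeom_prod hq n_range) mulrK // unitfE.
Qed.
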